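(* Let $P, P' \subset \mathbb{R}^n$ be centrally symmetric convex polyhedra, with centers of symmetry $c(P)$ and $c(P')$. For $v \in \mathbb{R}^n$ let $T_v$ denote translation by $v$, and consider the offset parameter $$f(v) = \min\{ r \geq 0 : T_v(P) \subset N(P';r)\}.$$ Then $f(v)$ is minimal (over all $v \in \mathbb{R}^n$) when $T_v$ moves the center $c(P)$ to the center $c(P')$, i.e. for $v = c(P') - c(P)$.
   Context: For a subset $C \subset \mathbb{R}^n$ and $r \geq 0$, the $r$-offset of $C$ is $N(C;r) = \{ p \in \mathbb{R}^n : d(p,q) \leq r \text{ for some } q \in C\}$, where $d$ is the Euclidean distance. A polyhedron here means a bounded convex polyhedron (convex polytope). It is centrally symmetric if there is a point $c(P)$ (its center) such that the point reflection through $c(P)$ maps $P$ onto itself. *)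

From HB Require Import structures.
From mathcomp Require Import all_boot all_order all_algebra.
From mathcomp Require Import all_classical all_reals.
Set Implicit Arguments. Unset Strict Implicit. Unset Printing Implicit Defensive.
Import Order.TTheory GRing.Theory Num.Theory.
Local Open Scope ring_scope.
Local Open Scope classical_set_scope.

Section Defs.
Variables (R : realType) (n : nat).
Notation pt := 'rV[R]_n.

Definition edist (p q : pt) : R := Num.sqrt (\sum_(i < n) (p 0 i - q 0 i) ^+ 2).

Definition halfspace (a : pt) (b : R) : set pt :=
  [set x | \sum_(i < n) a 0 i * x 0 i <= b].

Definition polyhedron (P : set pt) : Prop :=
  exists s : seq (pt * R), P = [set x | forall h, h \in s -> halfspace h.1 h.2 x].

Definition bounded_set (P : set pt) : Prop :=
  exists M : R, forall x, P x -> edist x 0 <= M.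

Definition polytope (P : set pt) : Prop := polyhedron P /\ bounded_set P.

Definition symmetric_about (P : set pt) (c : pt) : Prop :=
  [set c *+ 2 - x | x in P] = P.

Definition offset (C : set pt) (r : R) : set pt :=
  [set p | exists2 q, C q & edist p q <= r].

Definition translate (v : pt) (P : set pt) : set pt := [set x + v | x in P].

Definition offset_param (P P' : set pt) (v : pt) : R :=
  inf [set r : R | 0 <= r /\ translate v P `<=` offset P' r].

End Defs.

(** The point reflection through [c'] maps [N(P'; r)] onto itself, and since
    [P] is symmetric about [c] it maps [T_v(P)] onto [T_(2(c' - c) - v)(P)].
    Each point [x + (c' - c)] of [T_(c' - c)(P)] is the midpoint of [x + v] and
    [x + 2(c' - c) - v], and [N(P'; r)] is convex (as [P'] and the Euclidean
    norm are), so every radius admissible for [v] is admissible for [c' - c].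
    Boundedness of [P] only serves to make some radius admissible, so that the
    infimum is not the junk value [inf set0 = 0]. *)
From HB Require Import structures.
From mathcomp Require Import all_boot all_order all_algebra.
From mathcomp Require Import all_classical all_reals.
From mathcomp Require Import ring lra.
Set Implicit Arguments. Unset Strict Implicit. Unset Printing Implicit Defensive.
Import Order.TTheory GRing.Theory Num.Theory.
Local Open Scope ring_scope.
Local Open Scope classical_set_scope.

Lemma le_inf_subset (R : realType) (A B : set R) :
  A `<=` B -> A !=set0 -> has_lbound B -> inf B <= inf A.
Proof. by move=> AB A0 lbB; apply: lb_le_inf => // r /AB; apply: ge_inf. Qed.

Section EuclideanNorm.
Variables (R : realType) (n : nat).
Implicit Types (u w p q : 'rV[R]_n) (a r : R).

Definition sqnorm u : R := \sum_(i < n) u 0 i ^+ 2.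

Lemma sqnorm_ge0 u : 0 <= sqnorm u.
Proof. by apply: sumr_ge0 => i _; apply: sqr_ge0. Qed.

Lemma sqnormZ a u : sqnorm (a *: u) = a ^+ 2 * sqnorm u.
Proof.
by rewrite /sqnorm mulr_sumr; apply: eq_bigr => i _; rewrite mxE exprMn.
Qed.

Lemma sqnormN u : sqnorm (- u) = sqnorm u.
Proof. by rewrite -scaleN1r sqnormZ sqrrN expr1n mul1r. Qed.

Lemma sqnormD_le u w : sqnorm (u + w) <= 2 * (sqnorm u + sqnorm w).
Proof.
rewrite /sqnorm -big_split mulr_sumr; apply: ler_sum => i _.
by rewrite /= mxE; have := sqr_ge0 (u 0 i - w 0 i); nra.
Qed.

Lemma edistE p q : edist p q = Num.sqrt (sqnorm (p - q)).
Proof. by congr Num.sqrt; apply: eq_bigr => i _; rewrite !mxE. Qed.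

Lemma edist_le p q r : 0 <= r -> (edist p q <= r) = (sqnorm (p - q) <= r ^+ 2).
Proof.
by move=> r0; rewrite edistE -{1}(ger0_norm r0) -sqrtr_sqr ler_sqrt ?sqr_ge0.
Qed.

Lemma sqnorm_midpoint_le u w r : sqnorm u <= r ^+ 2 -> sqnorm w <= r ^+ 2 ->
  sqnorm (2^-1 *: (u + w)) <= r ^+ 2.
Proof.
move=> hu hw; rewrite sqnormZ; have := sqnormD_le u w.
have -> : (2^-1 : R) ^+ 2 = 4^-1 by rewrite exprVn -natrX.
move: (sqnorm (u + w)) => s; lra.
Qed.

End EuclideanNorm.

Section Polyhedra.
Variables (R : realType) (n : nat).
Implicit Types (P : set 'rV[R]_n) (x y c : 'rV[R]_n).

Lemma halfspace_convex (a : 'rV[R]_n) (b t : R) x y : 0 <= t <= 1 ->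
  halfspace a b x -> halfspace a b y -> halfspace a b ((1 - t) *: x + t *: y).
Proof.
rewrite /halfspace /= => /andP[t0 t1] hx hy.
have -> : \sum_(i < n) a 0 i * ((1 - t) *: x + t *: y) 0 i =
    (1 - t) * (\sum_(i < n) a 0 i * x 0 i) + t * (\sum_(i < n) a 0 i * y 0 i).
  rewrite !mulr_sumr -big_split; apply: eq_bigr => i _; rewrite /= !mxE; ring.
nra.
Qed.

Lemma polyhedron_convex P t x y : polyhedron P -> 0 <= t <= 1 ->
  P x -> P y -> P ((1 - t) *: x + t *: y).
Proof.
move=> [s ->] t01 /= Px Py h hs.
exact: halfspace_convex (Px h hs) (Py h hs).
Qed.

Lemma polyhedron_midpoint P x y : polyhedron P -> P x -> P y ->
  P (2^-1 *: (x + y)).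
Proof.
move=> polyP Px Py; have t01 : 0 <= (2^-1 : R) <= 1 by apply/andP; split; lra.
have := polyhedron_convex polyP t01 Px Py.
by rewrite (_ : 1 - 2^-1 = 2^-1 :> R) ?scalerDr //; lra.
Qed.

Lemma symmetric_aboutP P c x : symmetric_about P c -> P x -> P (c *+ 2 - x).
Proof. by move=> symP Px; rewrite -symP; exists x. Qed.

End Polyhedra.

Section Offset.
Variables (R : realType) (n : nat).
Implicit Types (P : set 'rV[R]_n) (v c : 'rV[R]_n) (r : R).

Lemma translate_sub_offset_center P (P' : set 'rV[R]_n) c (c' : 'rV[R]_n)
    v r : 0 <= r -> polyhedron P' -> symmetric_about P c -> symmetric_about P' c' ->
  translate v P `<=` offset P' r -> translate (c' - c) P `<=` offset P' r.
Proof.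
move=> r0 polyP' symP symP' sub _ [x Px <-].
have [q1 P'q1 d1] := sub (x + v) (ex_intro2 _ _ x Px erefl).
have [q2 P'q2 d2] := sub _ (ex_intro2 _ _ _ (symmetric_aboutP symP Px) erefl).
rewrite edist_le // in d1; rewrite edist_le // in d2.
exists (2^-1 *: (q1 + (c' *+ 2 - q2))).
  exact: polyhedron_midpoint polyP' P'q1 (symmetric_aboutP symP' P'q2).
rewrite edist_le //.
have -> : x + (c' - c) - 2^-1 *: (q1 + (c' *+ 2 - q2)) =
    2^-1 *: ((x + v - q1) + - (c *+ 2 - x + v - q2)).
  by apply/rowP => i; rewrite !mxE !mulr2n; field.
by apply: sqnorm_midpoint_le; rewrite // sqnormN.
Qed.

Lemma bounded_translate_sub_offset P (P' : set 'rV[R]_n) v :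
  bounded_set P -> P' !=set0 ->
  exists2 r, 0 <= r & translate v P `<=` offset P' r.
Proof.
move=> [M bdP] [q P'q].
set r := Num.sqrt (2 * (M ^+ 2 + sqnorm (v - q))).
exists r; first exact: sqrtr_ge0.
move=> _ [x Px <-]; exists q => //.
have M0 : 0 <= M by apply: le_trans (bdP x Px); rewrite edistE sqrtr_ge0.
have hx : sqnorm x <= M ^+ 2 by rewrite -(subr0 x) -edist_le // bdP.
rewrite edistE ler_sqrt -?addrA; last first.
  by rewrite mulr_ge0 ?addr_ge0 ?sqr_ge0 ?sqnorm_ge0.
apply: le_trans (sqnormD_le _ _) _; rewrite ler_pM2l //; lra.
Qed.

End Offset.

Theorem lemma1 (R : realType) (n : nat) (P P' : set 'rV[R]_n) (c c' : 'rV[R]_n) :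
  P !=set0 -> P' !=set0 ->
  polytope P -> polytope P' ->
  symmetric_about P c -> symmetric_about P' c' ->
  forall v : 'rV[R]_n, offset_param P P' (c' - c) <= offset_param P P' v.
Proof.
move=> _ P'0 [_ bdP] [polyP' _] symP symP' v.
apply: le_inf_subset.
- move=> r [r0 sub]; split => //.
  exact: translate_sub_offset_center polyP' symP symP' sub.
- by have [r r0 sub] := bounded_translate_sub_offset v bdP P'0; exists r.
- by exists 0 => r [].
Qed.
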